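(* Let $A$ be an AUF algebra, let $M\in\mathrm{Coh}_{\mathrm L}(A)$, and let $B=\mathrm{End}_{A,-}(M)^{\mathrm{op}}$. Then for each generating idempotent $p\in B$, the map $$\mathrm{End}^0_{-,B}(M)\to\mathrm{End}^0_{-,pBp}(Mp),\qquad S\mapsto S|_{Mp}$$ is a well-defined linear isomorphism.
   Context: All algebras are associative $\mathbb C$-algebras, not necessarily unital. An idempotent is $e$ with $e^2=e$. An algebra $A$ is AUF if there is a family $(e_i)_{i\in\mathfrak I}$ of mutually orthogonal idempotents with $\dim e_iAe_j<\infty$ and $A=\sum_{i,j}e_iAe_j$. A left $A$-module $M$ is quasicoherent if $\xi\in A\xi$ for all $\xi\in M$, coherent if moreover finitely generated; $\mathrm{Coh}_{\mathrm L}(A)$ is the category of coherent left $A$-modules. $B=\mathrm{End}_{A,-}(M)^{\mathrm{op}}$ (a finite-dimensional unital algebra) acts on $M$ on the right by $\xi\cdot T=T(\xi)$; $Mp=\{\xi p:\xi\in M\}$ is a quasicoherent left $A$-submodule with a right $pBp$-action. Irreducible means nonzero with no nonzero proper submodules; for a finite-dimensional unital algebra $B$, an idempotent $p\in B$ is generating if every irreducible left $B$-module on which $1_B$ acts as identity is a quotient of $Bp$. For a quasicoherent left $A$-module $N$: $N^\vee$ is the space of linear functionals $\varphi$ on $N$ for which there is an idempotent $e\in A$ with $\varphi(e\eta)=\varphi(\eta)$ for all $\eta$; $\mathrm{End}^0(N)$ is the span in $\mathrm{End}(N)$ of the operators $\eta\mapsto\varphi(\eta)\xi$ with $\xi\in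 N,\varphi\in N^\vee$; if $N$ carries a right action of an algebra $C$ commuting with $A$, $\mathrm{End}^0_{-,C}(N)=\{T\in\mathrm{End}^0(N): T(\xi c)=T(\xi)c\ \forall \xi,c\}$. *)

From HB Require Import structures.
From mathcomp Require Import all_boot all_order all_algebra.
From mathcomp Require Import complex.
From mathcomp Require Import Rstruct.
From Stdlib Require Rdefinitions.
Set Implicit Arguments. Unset Strict Implicit. Unset Printing Implicit Defensive.
Import GRing.Theory.
Local Open Scope ring_scope.

Definition CC : fieldType := (Rdefinitions.R)[i].

Definition is_linear (U V : lmodType CC) (f : U -> V) : Prop :=
  forall (c : CC) (x y : U), f (c *: x + y) = c *: f x + f y.

Definition is_linear_on (U V : lmodType CC) (P : U -> Prop) (f : U -> V) : Prop :=
  forall (c : CC) (x y : U), P x -> P y -> f (c *: x + y) = c *: f x + f y.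

Definition is_subspace (V : lmodType CC) (P : V -> Prop) : Prop :=
  P 0 /\ forall (c : CC) (x y : V), P x -> P y -> P (c *: x + y).

Definition in_span (V : lmodType CC) (s : seq V) (v : V) : Prop :=
  exists c : 'I_(size s) -> CC, v = \sum_(k < size s) c k *: s`_k.

Definition fin_dim_set (V : lmodType CC) (S : V -> Prop) : Prop :=
  exists s : seq V, forall v, S v -> in_span s v.

Definition is_algebra (A : lmodType CC) (mul : A -> A -> A) : Prop :=
  (forall a b c, mul a (mul b c) = mul (mul a b) c) /\
  (forall a, is_linear (mul a)) /\
  (forall b, is_linear (fun a => mul a b)).

Definition is_idempotent (A : lmodType CC) (mul : A -> A -> A) (e : A) : Prop :=
  mul e e = e.

Definition is_AUF (A : lmodType CC) (mul : A -> A -> A) : Prop :=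
  exists (I : Type) (e : I -> A),
    (forall i, is_idempotent mul (e i)) /\
    (forall i j, i <> j -> mul (e i) (e j) = 0) /\
    (forall i j, fin_dim_set (fun x => exists a, x = mul (mul (e i) a) (e j))) /\
    (forall a : A, exists (n : nat) (ii jj : 'I_n -> I) (b : 'I_n -> A),
        a = \sum_(k < n) mul (mul (e (ii k)) (b k)) (e (jj k))).

Definition is_left_module (A : lmodType CC) (mul : A -> A -> A)
    (M : lmodType CC) (act : A -> M -> M) : Prop :=
  (forall a, is_linear (act a)) /\
  (forall x, is_linear (fun a => act a x)) /\
  (forall a b x, act (mul a b) x = act a (act b x)).

Definition is_quasicoherent (A M : lmodType CC) (act : A -> M -> M) : Prop :=
  forall xi : M, exists a : A, act a xi = xi.

Definition is_fin_gen (A M : lmodType CC) (act : A -> M -> M) : Prop :=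
  exists s : seq M, forall xi : M,
    exists (c : 'I_(size s) -> CC) (a : 'I_(size s) -> A),
      xi = \sum_(k < size s) (c k *: s`_k + act (a k) s`_k).

Definition is_coherent (A : lmodType CC) (mul : A -> A -> A)
    (M : lmodType CC) (act : A -> M -> M) : Prop :=
  is_left_module mul act /\ is_quasicoherent act /\ is_fin_gen act.

(** ** B = End_{A,-}(M)^op, represented by its underlying set of functions.
    The product of B is b1 * b2 = b2 \o b1 (opposite of composition), and
    B acts on the right of M by xi . T = T xi. *)
Definition in_B (A M : lmodType CC) (act : A -> M -> M) (f : M -> M) : Prop :=
  is_linear f /\ forall a x, f (act a x) = act a (f x).

(** Left B-modules on which 1_B acts as the identity: for f, g in B,
    (f *_B g) . n = f . (g . n), i.e. bact (g \o f) n = bact f (bact g n). *)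
Definition is_unital_left_B_module (A M : lmodType CC) (act : A -> M -> M)
    (N : lmodType CC) (bact : (M -> M) -> N -> N) : Prop :=
  (forall f, in_B act f -> is_linear (bact f)) /\
  (forall (c : CC) f g n, in_B act f -> in_B act g ->
     bact (fun x => c *: f x + g x) n = c *: bact f n + bact g n) /\
  (forall f g n, in_B act f -> in_B act g -> bact (g \o f) n = bact f (bact g n)) /\
  (forall n, bact (fun x => x) n = n).

Definition is_irreducible_B_module (A M : lmodType CC) (act : A -> M -> M)
    (N : lmodType CC) (bact : (M -> M) -> N -> N) : Prop :=
  (exists n : N, n <> 0) /\
  forall Q : N -> Prop,
    is_subspace Q ->
    (forall f n, in_B act f -> Q n -> Q (bact f n)) ->
    (forall n, Q n -> n = 0) \/ (forall n, Q n).

(** [N] is a quotient of the left B-module Bp = { b *_B p } = { p \o b : b in B },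
    on which g in B acts by x |-> g *_B x = x \o g : there is a surjective
    B-linear map Bp -> N. *)
Definition in_Bp (A M : lmodType CC) (act : A -> M -> M) (p x : M -> M) : Prop :=
  exists b, in_B act b /\ x = p \o b.

Definition is_quotient_of_Bp (A M : lmodType CC) (act : A -> M -> M) (p : M -> M)
    (N : lmodType CC) (bact : (M -> M) -> N -> N) : Prop :=
  exists pi : (M -> M) -> N,
    (forall (c : CC) x y, in_Bp act p x -> in_Bp act p y ->
       pi (fun m => c *: x m + y m) = c *: pi x + pi y) /\
    (forall x g, in_Bp act p x -> in_B act g -> pi (x \o g) = bact g (pi x)) /\
    (forall n : N, exists x, in_Bp act p x /\ pi x = n).

Definition is_generating_idempotent (A M : lmodType CC) (act : A -> M -> M)
    (p : M -> M) : Prop :=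
  in_B act p /\ p \o p = p /\
  forall (N : lmodType CC) (bact : (M -> M) -> N -> N),
    is_unital_left_B_module act bact ->
    is_irreducible_B_module act bact ->
    is_quotient_of_Bp act p bact.

(** A quasicoherent A-module N is given as an A-stable subspace [P] of [M]
    (for N = M take P = fun _ => True; for N = Mp take P = image of p).
    Operators on N are represented by functions M -> M, only their values
    on P mattering. *)

Definition in_dual (A : lmodType CC) (mul : A -> A -> A)
    (M : lmodType CC) (act : A -> M -> M) (P : M -> Prop) (phi : M -> CC) : Prop :=
  is_linear_on P phi /\
  exists e : A, is_idempotent mul e /\ forall eta, P eta -> phi (act e eta) = phi eta.

(** T in End^0(N): T is (on N) a finite sum of operators eta |-> phi(eta) xi
    with xi in N, phi in N^vee (scalars being absorbed into phi). *)
Definition in_End0 (A : lmodType CC) (mul : A -> A -> A)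
    (M : lmodType CC) (act : A -> M -> M) (P : M -> Prop) (T : M -> M) : Prop :=
  exists (n : nat) (phi : 'I_n -> M -> CC) (xi : 'I_n -> M),
    (forall k, in_dual mul act P (phi k)) /\ (forall k, P (xi k)) /\
    forall eta, P eta -> T eta = \sum_(k < n) phi k eta *: xi k.

(** Mp = { xi p : xi in M } = { p xi : xi in M }. *)
Definition in_Mp (M : lmodType CC) (p : M -> M) (x : M) : Prop :=
  exists xi, x = p xi.

Definition in_End0_B (A : lmodType CC) (mul : A -> A -> A)
    (M : lmodType CC) (act : A -> M -> M) (S : M -> M) : Prop :=
  in_End0 mul act (fun _ => True) S /\
  forall f xi, in_B act f -> S (f xi) = f (S xi).

(** End^0_{-,pBp}(Mp): pBp = { p \o b \o p : b in B }, acting on the right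
    of Mp by xi . (pbp) = p (b (p xi)). *)
Definition in_End0_pBp (A : lmodType CC) (mul : A -> A -> A)
    (M : lmodType CC) (act : A -> M -> M) (p : M -> M) (T : M -> M) : Prop :=
  in_End0 mul act (in_Mp p) T /\
  forall b xi, in_B act b -> in_Mp p xi -> T (p (b (p xi))) = p (b (p (T xi))).

From HB Require Import structures.
From mathcomp Require Import all_boot all_order all_algebra.
From mathcomp Require Import boolp classical_sets functions.
Set Implicit Arguments. Unset Strict Implicit. Unset Printing Implicit Defensive.
Import GRing.Theory.
Local Open Scope ring_scope.
Local Open Scope classical_set_scope.

(* A generating idempotent p generates B as a
   two-sided ideal: otherwise BpB lies in a maximal left ideal L (Zorn), and
   B/L is an irreducible unital B-module on which p acts by zero, hence not a
   quotient of Bp. So, as maps on M, id = sum_k b_k \o p \o c_k with b_k, c_k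
   in B. An S commuting with B is then recovered from its restriction to Mp as
   S = sum_k b_k \o S \o p \o c_k, and conversely a T on Mp commuting with pBp
   extends to sum_k b_k \o T \o p \o c_k, which has finite rank and commutes
   with B. *)

Section LinearMaps.
Variables (U V : lmodType CC) (f : U -> V).
Hypothesis f_lin : is_linear f.

Lemma is_linear0 : f 0 = 0.
Proof.
have := f_lin 1 0 0; rewrite scaler0 addr0 scale1r => f00.
by apply: (addrI (f 0)); rewrite addr0 -f00.
Qed.

Lemma is_linearD x y : f (x + y) = f x + f y.
Proof. by have := f_lin 1 x y; rewrite !scale1r. Qed.

Lemma is_linearZ c x : f (c *: x) = c *: f x.
Proof. by have := f_lin c x 0; rewrite !addr0 is_linear0 addr0. Qed.

Lemma is_linear_sum (I : Type) (r : seq I) (P : pred I) (F : I -> U) :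
  f (\sum_(i <- r | P i) F i) = \sum_(i <- r | P i) f (F i).
Proof. exact: (big_morph f is_linearD is_linear0). Qed.

End LinearMaps.

Section Subspaces.
Variables (V : lmodType CC) (P : V -> Prop).
Hypothesis P_sub : is_subspace P.

Lemma subspace0 : P 0. Proof. exact: P_sub.1. Qed.

Lemma subspaceZD c x y : P x -> P y -> P (c *: x + y). Proof. exact: P_sub.2. Qed.

Lemma subspaceD x y : P x -> P y -> P (x + y).
Proof. by move=> Px Py; have := subspaceZD 1 Px Py; rewrite scale1r. Qed.

Lemma subspaceZ c x : P x -> P (c *: x).
Proof. by move=> Px; have := subspaceZD c Px subspace0; rewrite addr0. Qed.

Lemma subspaceB x y : P x -> P y -> P (x - y).
Proof. by move=> Px Py; rewrite -scaleN1r addrC; apply: subspaceZD. Qed.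

Lemma subspace_sum (I : Type) (r : seq I) (Q : pred I) (F : I -> V) :
  (forall i, Q i -> P (F i)) -> P (\sum_(i <- r | Q i) F i).
Proof. by move=> PF; apply: (big_ind P subspace0 subspaceD). Qed.

End Subspaces.

Record subspace (V : lmodType CC) := Subspace {
  subspace_mem :> V -> Prop;
  subspaceP : is_subspace subspace_mem }.

Section SubspaceQuotient.
Variables (V : lmodType CC) (W L : subspace V).

Definition coset (x : V) : V -> Prop := fun y => L (y - x).

(* Cosets are represented as predicates; [qpi] sends every element outside [W]
   to the class of 0. *)
Definition quotient := {C : V -> Prop | exists2 x, W x & C = coset x}.
HB.instance Definition _ := gen_eqMixin quotient.
HB.instance Definition _ := gen_choiceMixin quotient.

Definition wproj (x : V) : V := if pselect (W x) then x else 0.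

Lemma wproj_in x : W (wproj x).
Proof.
rewrite /wproj; destruct (pselect (W x)) => //; exact: subspace0 (subspaceP W).
Qed.

Lemma wprojE x : W x -> wproj x = x.
Proof. by rewrite /wproj; destruct (pselect (W x)). Qed.

Definition qpi (x : V) : quotient :=
  exist _ (coset (wproj x)) (ex_intro2 _ _ (wproj x) (wproj_in x) erefl).

Definition qrepr (C : quotient) : V := s2val (cid2 (svalP C)).

Lemma qrepr_in C : W (qrepr C).
Proof. by rewrite /qrepr; case: cid2. Qed.

Lemma qpi_repr C : qpi (qrepr C) = C.
Proof.
case: C => C CW; apply: eq_exist; rewrite /qrepr wprojE; last by case: cid2.
by case: cid2.
Qed.

Lemma quotient_ind (Pq : quotient -> Prop) :
  (forall x, W x -> Pq (qpi x)) -> forall C, Pq C.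
Proof. by move=> Pqpi C; rewrite -(qpi_repr C); apply/Pqpi/qrepr_in. Qed.

Lemma coset_eq x y : coset x = coset y <-> L (x - y).
Proof.
have L_sub := subspaceP L.
split=> [xy|Lxy].
  have : coset y y by rewrite /coset subrr; exact: subspace0 L_sub.
  by rewrite -xy /coset => /(subspaceB L_sub (subspace0 L_sub)); rewrite sub0r opprB.
apply: funext => z; apply: propext; rewrite /coset.
have -> : z - y = (z - x) + (x - y) by rewrite addrA subrK.
split=> [Lzx|Lzxy]; first exact: subspaceD.
by have := subspaceB L_sub Lzxy Lxy; rewrite addrK.
Qed.

Lemma qpi_eq x y : W x -> W y -> qpi x = qpi y <-> L (x - y).
Proof.
move=> Wx Wy; rewrite -coset_eq; split=> [/(congr1 sval)|xy] /=.
  by rewrite !wprojE.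
by apply: eq_exist; rewrite /= !wprojE.
Qed.

Lemma qrepr_qpi x : W x -> L (qrepr (qpi x) - x).
Proof. by move=> Wx; apply/qpi_eq => //; [exact: qrepr_in | rewrite qpi_repr]. Qed.

Let W_sub := subspaceP W.
Let L_sub := subspaceP L.
Let WD := subspaceD W_sub.
Let WZ := subspaceZ W_sub.

Definition qadd (C D : quotient) := qpi (qrepr C + qrepr D).
Definition qscale (c : CC) (C : quotient) := qpi (c *: qrepr C).

Lemma qaddE x y : W x -> W y -> qadd (qpi x) (qpi y) = qpi (x + y).
Proof.
move=> Wx Wy; apply/qpi_eq; [by apply: WD; exact: qrepr_in | exact: WD |].
by rewrite opprD addrACA; apply: subspaceD => //; exact: qrepr_qpi.
Qed.

Lemma qscaleE c x : W x -> qscale c (qpi x) = qpi (c *: x).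
Proof.
move=> Wx; apply/qpi_eq; [by apply: WZ; exact: qrepr_in | exact: WZ |].
by rewrite -scalerBr; apply: subspaceZ => //; exact: qrepr_qpi.
Qed.

Lemma qaddA : associative qadd.
Proof.
elim/quotient_ind=> x Wx; elim/quotient_ind=> y Wy; elim/quotient_ind=> z Wz.
by rewrite !qaddE ?addrA; auto.
Qed.

Lemma qaddC : commutative qadd.
Proof.
by elim/quotient_ind=> x Wx; elim/quotient_ind=> y Wy; rewrite !qaddE // addrC.
Qed.

Lemma qadd0 : left_id (qpi 0) qadd.
Proof. by elim/quotient_ind=> x Wx; rewrite qaddE ?add0r //; exact: subspace0. Qed.

Lemma qaddN : left_inverse (qpi 0) (qscale (-1)) qadd.
Proof.
elim/quotient_ind=> x Wx; rewrite qscaleE // qaddE //; last exact: WZ.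
by rewrite scaleN1r addNr.
Qed.

HB.instance Definition _ := GRing.isZmodule.Build quotient qaddA qaddC qadd0 qaddN.

Lemma qpiD x y : W x -> W y -> qpi x + qpi y = qpi (x + y).
Proof. exact: qaddE. Qed.

Lemma qscaleA a b C : qscale a (qscale b C) = qscale (a * b) C.
Proof. by elim/quotient_ind: C => x Wx; rewrite !qscaleE ?scalerA; auto. Qed.

Lemma qscale1 : left_id 1 qscale.
Proof. by elim/quotient_ind=> x Wx; rewrite qscaleE // scale1r. Qed.

Lemma qscaleDr : right_distributive qscale +%R.
Proof.
move=> a; elim/quotient_ind=> x Wx; elim/quotient_ind=> y Wy.
rewrite qpiD // !qscaleE // ?qpiD ?scalerDr //; auto.
Qed.

Lemma qscaleDl C : {morph qscale^~ C : a b / a + b}.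
Proof.
move=> a b; elim/quotient_ind: C => x Wx.
rewrite !qscaleE // qpiD ?scalerDl //; auto.
Qed.

HB.instance Definition _ :=
  GRing.Zmodule_isLmodule.Build CC quotient qscaleA qscale1 qscaleDr qscaleDl.

Lemma qpiZD c x y : W x -> W y -> qpi (c *: x + y) = c *: qpi x + qpi y.
Proof.
move=> Wx Wy; have qpiZ : c *: qpi x = qpi (c *: x) by exact: qscaleE.
by rewrite qpiZ qpiD //; exact: WZ.
Qed.

Lemma qpi_eq0 x : W x -> qpi x = 0 <-> L x.
Proof. by move=> Wx; rewrite (qpi_eq Wx (subspace0 W_sub)) subr0. Qed.

End SubspaceQuotient.

Section OrdinalConcat.
Variables (T : Type) (n1 n2 : nat) (f1 : 'I_n1 -> T) (f2 : 'I_n2 -> T).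

Definition ord_cat (k : 'I_(n1 + n2)) : T :=
  match fintype.split k with inl i => f1 i | inr j => f2 j end.

Lemma ord_cat_lshift i : ord_cat (lshift n2 i) = f1 i.
Proof. by rewrite /ord_cat (unsplitK (inl _ i)). Qed.

Lemma ord_cat_rshift j : ord_cat (rshift n1 j) = f2 j.
Proof. by rewrite /ord_cat (unsplitK (inr _ j)). Qed.

Lemma ord_catP (P : T -> Prop) :
  (forall i, P (f1 i)) -> (forall j, P (f2 j)) -> forall k, P (ord_cat k).
Proof. by move=> P1 P2 k; rewrite /ord_cat; case: fintype.split. Qed.

End OrdinalConcat.

Section ModuleEndomorphisms.
Variables (A M : lmodType CC) (act : A -> M -> M).
Local Notation inB := (in_B act).

Lemma in_B_id : inB (fun x => x).
Proof. by []. Qed.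

Lemma in_B_comp f g : inB f -> inB g -> inB (f \o g).
Proof.
move=> [f_lin f_act] [g_lin g_act]; split=> [c x y|a x] /=.
  by rewrite g_lin f_lin.
by rewrite g_act f_act.
Qed.

(* As B = End_{A,-}(M)^op, the composite [x \o g] is the product [g x] in B. *)
Definition is_left_ideal (L : (M -> M) -> Prop) : Prop :=
  [/\ (forall x, L x -> inB x), is_subspace L &
      (forall x g, L x -> inB g -> L (x \o g))].

Lemma left_ideal_subspace L : is_left_ideal L -> is_subspace L.
Proof. by case. Qed.

Lemma chain_bigcup_left_ideal (I : Type) (F : set I) (X : I -> (M -> M) -> Prop) :
  F !=set0 -> total_on F (fun i j => X i `<=` X j) ->
  (forall i, F i -> is_left_ideal (X i)) -> is_left_ideal (\bigcup_(i in F) X i).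
Proof.
move=> [i0 Fi0] F_chain F_ideal; split.
- by move=> x [i Fi Xix]; have [XB _ _] := F_ideal i Fi; exact: XB.
- split; first by exists i0 => //; have [_ [] ] := F_ideal i0 Fi0.
  move=> c x y [i Fi Xix] [j Fj Xjy].
  have [ij|ji] := F_chain i j Fi Fj.
    by exists j => //; have [_ [_ X_lc] _] := F_ideal j Fj; apply: X_lc => //; exact: ij.
  by exists i => //; have [_ [_ X_lc] _] := F_ideal i Fi; apply: X_lc => //; exact: ji.
- move=> x g [i Fi Xix] gB; exists i => //.
  by have [_ _ X_comp] := F_ideal i Fi; exact: X_comp.
Qed.

Lemma maximal_left_ideal_exists (I : (M -> M) -> Prop) :
  is_left_ideal I -> ~ I (fun x => x) ->
  exists L, [/\ is_left_ideal L, ~ L (fun x => x), I `<=` L &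
    forall L', is_left_ideal L' -> L `<` L' -> L' (fun x => x)].
Proof.
move=> I_ideal I_proper.
pose adm X := [/\ is_left_ideal X, ~ X (fun x => x) & I `<=` X].
have I_adm : adm I by split.
pose T := {X | adm X}.
pose R (X Y : T) := `[< sval X `<=` sval Y >].
have [[L [L_ideal L_proper IL]] L_max] : exists t : T, premaximal R t.
  apply: (ZL_preorder (exist _ I I_adm)) => [X|X Y Z /asboolP XY /asboolP YZ|C C_chain].
  - exact/asboolP.
  - by apply/asboolP; exact: subset_trans XY YZ.
  have [[X0 CX0]|C0] := pselect (C !=set0); last first.
    by exists (exist _ I I_adm) => X CX; exfalso; apply: C0; exists X.
  have U_adm : adm (\bigcup_(X in C) sval X).
    split.
    - apply: chain_bigcup_left_ideal; first by exists X0.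
        by move=> X Y CX CY; case: (C_chain X Y CX CY) => /asboolP; [left|right].
      by move=> X _; case: (svalP X).
    - by move=> [X _ Xid]; case: (svalP X) => _ /(_ Xid).
    - by move=> x Ix; exists X0 => //; case: (svalP X0) => _ _; apply.
  by exists (exist _ _ U_adm) => X CX; apply/asboolP => x Xx; exists X.
exists L; split=> // L' L'_ideal [LL' L'L]; apply: contrapT => L'_proper.
have L'_adm : adm L' by split=> //; exact: subset_trans IL LL'.
by have /asboolP := L_max (exist _ L' L'_adm) (asboolT LL').
Qed.

End ModuleEndomorphisms.

Lemma not_quotient_of_Bp_of_annihilated (A M : lmodType CC) (act : A -> M -> M)
    (p : M -> M) (N : lmodType CC) (bact : (M -> M) -> N -> N) :
  in_B act p -> p \o p = p -> is_unital_left_B_module act bact ->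
  (forall n, bact p n = 0) -> (exists n : N, n <> 0) ->
  ~ is_quotient_of_Bp act p bact.
Proof.
move=> pB p_idem [bact_lin _] p_ann [n0 n0_neq0] [pi [_ [pi_comp pi_onto]]].
have p_Bp : in_Bp act p p by exists (fun x => x).
have pi_p : pi p = 0 by rewrite -{1}p_idem pi_comp.
apply: n0_neq0; have [_ [[b [bB ->]] <-]] := pi_onto n0.
by rewrite pi_comp // pi_p is_linear0 //; exact: bact_lin.
Qed.

Section ActionLinear.
Variables (A M : lmodType CC) (act : A -> M -> M).
Hypothesis act_lin : forall a, is_linear (act a).
Local Notation inB := (in_B act).

Lemma in_B_subspace : is_subspace inB.
Proof.
split.
  split=> [c x y|a x] /=; first by rewrite scaler0 addr0.
  by rewrite is_linear0.
move=> c f g [f_lin f_act] [g_lin g_act].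
split=> [d x y|a x]; rewrite !addrfctE !scalrfctE /=.
  by rewrite f_lin g_lin !scalerDr !scalerA mulrC addrACA.
by rewrite f_act g_act act_lin.
Qed.

Canonical B_subspace := Subspace in_B_subspace.

Section QuotientModule.
Variable L : (M -> M) -> Prop.
Hypothesis L_ideal : is_left_ideal act L.

Let L_subspace := Subspace (left_ideal_subspace L_ideal).
Local Notation qpi := (qpi B_subspace L_subspace).

Definition quotient_act (f : M -> M) (C : quotient B_subspace L_subspace) :
  quotient B_subspace L_subspace := qpi (qrepr C \o f).

Lemma quotient_act_qpi f x : inB f -> inB x -> quotient_act f (qpi x) = qpi (x \o f).
Proof.
move=> fB xB; apply/qpi_eq; [exact: in_B_comp (qrepr_in _) fB | exact: in_B_comp|].
have [_ _ L_comp] := L_ideal.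
exact: L_comp (qrepr_qpi L_subspace xB) fB.
Qed.

Lemma quotient_act_unital : is_unital_left_B_module act quotient_act.
Proof.
have B_lc := subspaceZD in_B_subspace.
split; [|split; [|split]].
- move=> f fB c; elim/quotient_ind=> x xB; elim/quotient_ind=> y yB.
  rewrite -qpiZD // !quotient_act_qpi //; last exact: B_lc.
  by rewrite -qpiZD //; exact: in_B_comp.
- move=> c f g C fB gB; elim/quotient_ind: C => x xB.
  rewrite !quotient_act_qpi //; last exact: (B_lc c f g).
  rewrite -qpiZD; try exact: in_B_comp.
  by congr qpi; apply: funext => z /=; rewrite xB.1.
- move=> f g C fB gB; elim/quotient_ind: C => x xB.
  by rewrite !quotient_act_qpi //; do ?exact: in_B_comp.
- exact: qpi_repr.
Qed.

Hypothesis L_proper : ~ L (fun x => x).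

Lemma qpi_id_neq0 : qpi (fun x => x) <> 0.
Proof. by move/qpi_eq0 => /(_ (in_B_id act)). Qed.

Hypothesis L_maximal :
  forall L', is_left_ideal act L' -> L `<` L' -> L' (fun x => x).

Lemma quotient_act_irreducible : is_irreducible_B_module act quotient_act.
Proof.
split; first by exists (qpi (fun x => x)); exact: qpi_id_neq0.
move=> Q Q_sub Q_stable.
case: (pselect (exists2 C, Q C & C <> 0)) => [[C0 QC0 C0_neq0]|Q0]; last first.
  by left=> C QC; apply: contrapT => C_neq0; apply: Q0; exists C.
right.
pose L' y := inB y /\ Q (qpi y).
have L'_ideal : is_left_ideal act L'.
  split=> [y [] //| |y g [yB Qy] gB].
  - split; first by split; [exact: subspace0 in_B_subspace | exact: subspace0 Q_sub].
    move=> c x y [xB Qx] [yB Qy]; split; first exact: subspaceZD in_B_subspace _ _ _ xB yB.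
    by rewrite qpiZD //; exact: subspaceZD.
  - by split; [exact: in_B_comp | rewrite -quotient_act_qpi //; exact: Q_stable].
have L'_id : L' (fun x => x).
  apply: L_maximal => //; split.
    have [L_B _ _] := L_ideal.
    move=> y Ly; have yB := L_B y Ly; split=> //.
    by have /(qpi_eq0 L_subspace yB) -> := Ly; exact: subspace0 Q_sub.
  move=> L'L; apply: C0_neq0; rewrite -(qpi_repr C0); apply/qpi_eq0; first exact: qrepr_in.
  by apply: L'L; split; [exact: qrepr_in | rewrite qpi_repr].
elim/quotient_ind=> x xB.
by have := Q_stable x _ xB L'_id.2; rewrite quotient_act_qpi.
Qed.

End QuotientModule.
End ActionLinear.

Section TwoSidedIdeal.
Variables (A M : lmodType CC) (act : A -> M -> M).
Hypothesis act_lin : forall a, is_linear (act a).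
Local Notation inB := (in_B act).
Variable p : M -> M.

Definition in_BpB (y : M -> M) : Prop :=
  exists n (b c : 'I_n -> M -> M), [/\ (forall k, inB (b k)), (forall k, inB (c k)) &
    y = \sum_(k < n) (b k \o p \o c k)].

Hypothesis p_B : inB p.

Lemma BpB_left_ideal : is_left_ideal act in_BpB.
Proof.
split.
- move=> _ [n [b [c [bB cB ->]]]].
  apply: (subspace_sum (in_B_subspace act_lin)) => k _.
  exact: in_B_comp (in_B_comp (bB k) p_B) (cB k).
- split.
    exists 0%N, (fun _ => 0), (fun _ => 0).
    by split=> [k|k|]; [case: k | case: k | rewrite big_ord0].
  move=> a _ _ [n1 [b1 [c1 [b1B c1B ->]]]] [n2 [b2 [c2 [b2B c2B ->]]]].
  exists (n1 + n2)%N, (ord_cat (fun k => a *: b1 k) b2), (ord_cat c1 c2); split.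
  + by apply: ord_catP => // k; exact: subspaceZ (in_B_subspace act_lin) a _ (b1B k).
  + exact: ord_catP.
  + rewrite big_split_ord scaler_sumr; congr (_ + _); apply: eq_bigr => k _.
      by rewrite !ord_cat_lshift.
    by rewrite !ord_cat_rshift.
- move=> _ g [n [b [c [bB cB ->]]]] gB.
  exists n, b, (fun k => c k \o g); split => //; first by move=> k; exact: in_B_comp.
  by rewrite !fct_sumE.
Qed.

Lemma BpB_comp_p x : inB x -> in_BpB (x \o p).
Proof.
move=> xB; exists 1%N, (fun _ => x), (fun _ => fun y => y); split => //.
by rewrite big_ord1.
Qed.

End TwoSidedIdeal.

Section GeneratingIdempotent.
Variables (A M : lmodType CC) (act : A -> M -> M).
Hypothesis act_lin : forall a, is_linear (act a).
Local Notation inB := (in_B act).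

Lemma generating_idempotent_BpB p :
  is_generating_idempotent act p -> in_BpB act p (fun x => x).
Proof.
move=> [pB [p_idem p_gen]]; apply: contrapT => BpB_proper.
have [L [L_ideal L_proper BpB_L L_max]] :=
  maximal_left_ideal_exists (BpB_left_ideal act_lin pB) BpB_proper.
have N_unital := quotient_act_unital act_lin L_ideal.
apply: (not_quotient_of_Bp_of_annihilated pB p_idem N_unital).
- elim/quotient_ind=> x xB; rewrite quotient_act_qpi //.
  by apply/qpi_eq0; [exact: in_B_comp | apply: BpB_L; exact: BpB_comp_p].
- by exists (qpi _ _ (fun x => x)); exact: qpi_id_neq0.
- exact: p_gen _ _ N_unital (quotient_act_irreducible act_lin L_ideal L_proper L_max).
Qed.

Lemma generating_idempotent_decomposition p :
  is_generating_idempotent act p ->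
  exists n (b c : 'I_n -> M -> M), [/\ (forall k, inB (b k)), (forall k, inB (c k)) &
    forall x, \sum_(k < n) b k (p (c k x)) = x].
Proof.
move=> /generating_idempotent_BpB [n [b [c [bB cB one]]]].
exists n, b, c; split=> // x.
by move/(congr1 (fun f => f x)): one; rewrite fct_sumE.
Qed.

End GeneratingIdempotent.

Section FiniteRankOperators.
Variables (A : lmodType CC) (mul : A -> A -> A) (M : lmodType CC) (act : A -> M -> M).
Local Notation inB := (in_B act).
Local Notation End0 := (in_End0 mul act).

Lemma in_dual_comp (P Q : M -> Prop) phi g :
  in_dual mul act P phi -> inB g -> (forall x, Q x -> P (g x)) ->
  in_dual mul act Q (phi \o g).
Proof.
move=> [phi_lin [e [e_idem phi_e]]] [g_lin g_act] gQP; split.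
  by move=> c x y Qx Qy /=; rewrite g_lin phi_lin //; exact: gQP.
by exists e; split=> // x Qx /=; rewrite g_act phi_e //; exact: gQP.
Qed.

Lemma in_End0_comp (P Q : M -> Prop) T f g :
  End0 P T -> is_linear f -> inB g ->
  (forall x, Q x -> P (g x)) -> (forall x, P x -> Q (f x)) ->
  End0 Q (f \o T \o g).
Proof.
move=> [n [phi [xi [phi_dual [P_xi T_eq]]]]] f_lin gB gQP fPQ.
exists n, (fun k => phi k \o g), (fun k => f (xi k)); split.
  by move=> k; exact: in_dual_comp.
split=> [k|x Qx /=]; first exact: fPQ.
rewrite T_eq ?(is_linear_sum f_lin); last exact: gQP.
by apply: eq_bigr => k _; rewrite is_linearZ.
Qed.

Lemma in_End0_eq_on (P : M -> Prop) T1 T2 :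
  (forall x, P x -> T1 x = T2 x) -> End0 P T1 -> End0 P T2.
Proof.
move=> T12 [n [phi [xi [phi_dual [P_xi T_eq]]]]]; exists n, phi, xi.
by split=> //; split=> // x Px; rewrite -T12 // T_eq.
Qed.

Lemma in_End0_linear_on (P : M -> Prop) T c x y :
  End0 P T -> P x -> P y -> P (c *: x + y) -> T (c *: x + y) = c *: T x + T y.
Proof.
move=> [n [phi [xi [phi_dual [_ T_eq]]]]] Px Py Pcxy; rewrite !T_eq //.
rewrite scaler_sumr -big_split; apply: eq_bigr => k _.
by rewrite (phi_dual k).1 // scalerDl scalerA.
Qed.

Lemma in_End0_is_linear T : End0 (fun _ => True) T -> is_linear T.
Proof. by move=> T_End0 c x y; exact: in_End0_linear_on T_End0 I I I. Qed.

Lemma in_End0_add (P : M -> Prop) T1 T2 :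
  End0 P T1 -> End0 P T2 -> End0 P (fun x => T1 x + T2 x).
Proof.
move=> [n1 [phi1 [xi1 [dual1 [P_xi1 T1_eq]]]]] [n2 [phi2 [xi2 [dual2 [P_xi2 T2_eq]]]]].
exists (n1 + n2)%N, (ord_cat phi1 phi2), (ord_cat xi1 xi2); split.
  exact: ord_catP.
split=> [|x Px]; first exact: ord_catP.
rewrite big_split_ord T1_eq // T2_eq //; congr (_ + _); apply: eq_bigr => k _.
  by rewrite !ord_cat_lshift.
by rewrite !ord_cat_rshift.
Qed.

Lemma in_End0_sum (P : M -> Prop) n (F : 'I_n -> M -> M) :
  (forall k, End0 P (F k)) -> End0 P (fun x => \sum_(k < n) F k x).
Proof.
elim: n F => [|n IH] F F_End0.
  exists 0%N, (fun _ _ => 0), (fun _ => 0).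
  split=> [k|]; first by case: k.
  by split=> [k|x _]; [case: k | rewrite !big_ord0].
apply: (in_End0_eq_on
  (T1 := fun x => \sum_(k < n) F (widen_ord (leqnSn n) k) x + F ord_max x)).
  by move=> x _; rewrite big_ord_recr.
by apply: in_End0_add => //; apply: IH.
Qed.

End FiniteRankOperators.

Section Restriction.
Variables (A : lmodType CC) (mul : A -> A -> A) (M : lmodType CC) (act : A -> M -> M).
Local Notation inB := (in_B act).
Variable p : M -> M.
Hypotheses (p_B : inB p) (p_idem : p \o p = p).

Let p_idemE x : p (p x) = p x.
Proof. by rewrite -[in RHS]p_idem. Qed.

Lemma in_End0_B_restrict S : in_End0_B mul act S ->
  (forall x, in_Mp p x -> in_Mp p (S x)) /\ in_End0_pBp mul act p S.
Proof.
move=> [S_End0 S_comm].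
have S_Mp x : in_Mp p x -> p (S x) = S x.
  by move=> [y ->]; rewrite (S_comm p) // p_idemE.
split; first by move=> _ [y ->]; exists (S y); exact: S_comm.
split; last by move=> b xi bB _; rewrite (S_comm p) // (S_comm b) // (S_comm p).
apply: (in_End0_eq_on S_Mp).
by apply: in_End0_comp S_End0 p_B.1 (in_B_id act) _ _ => // x _; exists x.
Qed.

Variables (n : nat) (b c : 'I_n -> M -> M).
Hypotheses (b_B : forall k, inB (b k)) (c_B : forall k, inB (c k)).
Hypothesis decomp : forall x, \sum_(k < n) b k (p (c k x)) = x.

Lemma in_End0_B_eq_on_Mp S1 S2 :
  in_End0_B mul act S1 -> in_End0_B mul act S2 ->
  (forall x, in_Mp p x -> S1 x = S2 x) -> forall x, S1 x = S2 x.
Proof.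
move=> [S1_End0 S1_comm] [S2_End0 S2_comm] S12 x.
rewrite -(decomp x) (is_linear_sum (in_End0_is_linear S1_End0)).
rewrite (is_linear_sum (in_End0_is_linear S2_End0)).
by apply: eq_bigr => k _; rewrite (S1_comm (b k)) // (S2_comm (b k)) // S12 //; exists (c k x).
Qed.

Lemma in_End0_pBp_extend T : in_End0_pBp mul act p T ->
  exists S, in_End0_B mul act S /\ forall x, in_Mp p x -> S x = T x.
Proof.
move=> [T_End0 T_comm].
have T_pBp h y : inB h -> T (p (h (p y))) = p (h (T (p y))).
  have T_Mp : T (p y) = p (T (p y)).
    by have := T_comm _ (p y) (in_B_id act) (ex_intro _ y erefl); rewrite /= !p_idemE.
  move=> hB; have := T_comm h (p y) hB (ex_intro _ y erefl).
  by rewrite p_idemE -T_Mp.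
have Tp_lin : is_linear (T \o p).
  move=> a x y /=; rewrite p_B.1.
  apply: in_End0_linear_on T_End0 _ _ _; [by exists x | by exists y |].
  by exists (a *: x + y); rewrite p_B.1.
pose S x := \sum_(k < n) b k (T (p (c k x))).
exists S; split; [split|].
- apply: in_End0_sum => k.
  apply: (in_End0_comp T_End0 (b_B k).1 (in_B_comp p_B (c_B k))) => // x _.
  by exists (c k x).
- move=> f x fB.
  have T_pB g : inB g -> T (p (g x)) = \sum_(j < n) p (g (b j (T (p (c j x))))).
    move=> gB; rewrite -{1}[x]decomp (is_linear_sum gB.1) -/((T \o p) _).
    rewrite (is_linear_sum Tp_lin); apply: eq_bigr => j _ /=.
    exact: (T_pBp (g \o b j) _ (in_B_comp gB (b_B j))).
  rewrite /S (is_linear_sum fB.1).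
  transitivity (\sum_(k < n) \sum_(j < n) b k (p (c k (f (b j (T (p (c j x)))))))).
    apply: eq_bigr => k _; rewrite (T_pB (c k \o f)) ?(is_linear_sum (b_B k).1) //.
    exact: in_B_comp.
  by rewrite exchange_big; apply: eq_bigr => j _; exact: decomp.
- move=> _ [y ->]; rewrite /S -[RHS]decomp.
  by apply: eq_bigr => k _; rewrite T_pBp.
Qed.

End Restriction.

Theorem proposition11p5
  (A : lmodType CC) (mul : A -> A -> A) (M : lmodType CC) (act : A -> M -> M)
  (p : M -> M) :
  is_algebra mul -> is_AUF mul -> is_coherent mul act ->
  is_generating_idempotent act p ->
  (* well-defined: S maps Mp into Mp and S|_{Mp} lies in End^0_{-,pBp}(Mp) *)
  (forall S, in_End0_B mul act S ->
     (forall x, in_Mp p x -> in_Mp p (S x)) /\ in_End0_pBp mul act p S) /\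
  (* injective *)
  (forall S1 S2, in_End0_B mul act S1 -> in_End0_B mul act S2 ->
     (forall x, in_Mp p x -> S1 x = S2 x) -> forall x, S1 x = S2 x) /\
  (* surjective *)
  (forall T, in_End0_pBp mul act p T ->
     exists S, in_End0_B mul act S /\ forall x, in_Mp p x -> S x = T x).
Proof.
move=> _ _ [[act_lin _] _] p_gen.
have [n [b [c [b_B c_B decomp]]]] := generating_idempotent_decomposition act_lin p_gen.
have [p_B [p_idem _]] := p_gen.
split; first exact: in_End0_B_restrict.
split; first exact: in_End0_B_eq_on_Mp decomp.
exact: in_End0_pBp_extend decomp.
Qed.
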